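(* Let $I$ be an ideal of $\mathbb{S}_n$ ($n\ge1$). The following are equivalent: (1) $\mathbb{S}_n/I$ is left Noetherian; (2) $\mathbb{S}_n/I$ is right Noetherian; (3) $\mathbb{S}_n/I$ is commutative; (4) $\mathfrak a_n\subseteq I$, i.e. $I$ contains all the height one primes $\mathfrak p_1,\dots,\mathfrak p_n$ of $\mathbb{S}_n$.
   Context: $K$ is a field. $\mathbb{S}_n$ is the $K$-algebra generated by $x_1,\dots,x_n,y_1,\dots,y_n$ subject to the defining relations $y_ix_i=1$ for all $i$, and $[x_i,y_j]=[x_i,x_j]=[y_i,y_j]=0$ for all $i\ne j$. For each $i$, $\mathbb{S}_1(i)$ is the subalgebra generated by $x_i,y_i$, and $\mathbb{S}_n=\mathbb{S}_1(1)\otimes\cdots\otimes\mathbb{S}_1(n)$. $F(i)=\bigoplus_{k,l\in\mathbb N}K(x_i^ky_i^l-x_i^{k+1}y_i^{l+1})$ is an ideal of $\mathbb{S}_1(i)$. Define $\mathfrak p_i=\mathbb{S}_1(1)\otimes\cdots\otimes F(i)\otimes\cdots\otimes\mathbb{S}_1(n)$ ($F(i)$ in the $i$-th factor); these are exactly the height one primes of $\mathbb{S}_n$. Set $\mathfrak a_n=\mathfrak p_1+\cdots+\mathfrak p_n$, so that $\mathbb{S}_n/\mathfrak a_n\cong K[x_1^{\pm1},\dots,x_n^{\pm1}]$. *)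

From HB Require Import structures.
From mathcomp Require Import all_boot all_order all_algebra.
Set Implicit Arguments. Unset Strict Implicit. Unset Printing Implicit Defensive.
Import GRing.Theory.
Local Open Scope ring_scope.

Definition Sn_rel (R : pzRingType) (n : nat) (x y : 'I_n -> R) : Prop :=
  (forall i, y i * x i = 1) /\
  (forall i j, i != j ->
     [/\ x i * y j = y j * x i, x i * x j = x j * x i & y i * y j = y j * y i]).

(* A (with the elements x, y) is the K-algebra generated by x_i, y_i subject
   only to the relations Sn_rel, i.e. A is (a copy of) S_n:
   the relations hold, x, y generate A as a K-algebra, and A has the
   universal property of the presented algebra. *)
Definition is_Sn (K : fieldType) (n : nat) (A : algType K) (x y : 'I_n -> A)
  : Prop :=
  [/\ Sn_rel x y,
      (forall S : A -> Prop,
          S 1 -> (forall i, S (x i) /\ S (y i)) ->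
          (forall a b, S a -> S b -> S (a + b)) ->
          (forall a b, S a -> S b -> S (a * b)) ->
          (forall (k : K) a, S a -> S (k *: a)) ->
          forall a, S a)
    & (forall (B : algType K) (x' y' : 'I_n -> B), Sn_rel x' y' ->
          exists f : {lrmorphism A -> B},
            forall i, f (x i) = x' i /\ f (y i) = y' i)].

(* Spanning elements of the height one prime p_i
   = S_1(1) (x) ... (x) F(i) (x) ... (x) S_1(n):
   (prod_{j<>i} x_j^{a_j} y_j^{b_j}) * (x_i^k y_i^l - x_i^{k+1} y_i^{l+1}). *)
Definition pgen (R : pzRingType) (n : nat) (x y : 'I_n -> R) (i : 'I_n)
  (a b : 'I_n -> nat) (k l : nat) : R :=
  (\prod_(j < n | j != i) (x j ^+ a j * y j ^+ b j)) *
  (x i ^+ k * y i ^+ l - x i ^+ k.+1 * y i ^+ l.+1).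

Definition in_p (K : fieldType) (n : nat) (A : algType K) (x y : 'I_n -> A)
  (i : 'I_n) (v : A) : Prop :=
  exists s : seq (K * (('I_n -> nat) * ('I_n -> nat) * nat * nat)),
    v = \sum_(t <- s) t.1 *: pgen x y i t.2.1.1.1 t.2.1.1.2 t.2.1.2 t.2.2.

Definition in_an (K : fieldType) (n : nat) (A : algType K) (x y : 'I_n -> A)
  (v : A) : Prop :=
  exists w : 'I_n -> A, (forall i, in_p x y i (w i)) /\ v = \sum_(i < n) w i.

Definition is_ideal (R : pzRingType) (I : R -> Prop) : Prop :=
  [/\ I 0, (forall a b, I a -> I b -> I (a + b))
    & (forall a b c, I b -> I (a * b * c))].

Definition is_left_ideal (R : pzRingType) (L : R -> Prop) : Prop :=
  [/\ L 0, (forall a b, L a -> L b -> L (a + b))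
    & (forall r a, L a -> L (r * a))].

Definition is_right_ideal (R : pzRingType) (L : R -> Prop) : Prop :=
  [/\ L 0, (forall a b, L a -> L b -> L (a + b))
    & (forall r a, L a -> L (a * r))].

Definition left_noetherian (R : pzRingType) : Prop :=
  forall L : nat -> R -> Prop,
    (forall k, is_left_ideal (L k)) ->
    (forall k v, L k v -> L k.+1 v) ->
    exists N, forall m, (N <= m)%N -> forall v, L m v -> L N v.

Definition right_noetherian (R : pzRingType) : Prop :=
  forall L : nat -> R -> Prop,
    (forall k, is_right_ideal (L k)) ->
    (forall k v, L k v -> L k.+1 v) ->
    exists N, forall m, (N <= m)%N -> forall v, L m v -> L N v.

Definition comm_ring (R : pzRingType) : Prop := forall a b : R, a * b = b * a.

From HB Require Import structures.
From mathcomp Require Import all_boot all_order all_algebra.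
From Stdlib Require Import Classical.
Set Implicit Arguments. Unset Strict Implicit. Unset Printing Implicit Defensive.
Import GRing.Theory.
Local Open Scope ring_scope.

(* For an ideal I of S_n and B = S_n / I, the four conditions
   "B left Noetherian", "B right Noetherian", "B commutative" and
   "a_n contained in I" are equivalent.
   - Noetherian => commutative: a left Noetherian ring is Dedekind-finite
     (v u = 1 forces u v = 1: the left ideals generated by e, e v, e v^2, ...
     with e = 1 - u v stabilize, which forces e = 0); the right-handed case
     follows through the converse ring. In B we have y_i x_i = 1, hence
     x_i y_i = 1, and since the defining relations make all other pairs of
     generators commute, B is commutative.
   - Commutative => Noetherian: B is then generated by the image of K and the
     2n images of the x_i, y_i, so it is a quotient of a polynomial ring in
     2n variables over K, Noetherian by Hilbert's basis theorem (proved below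
     for chains of left ideals).
   - x_i y_i = 1 in B for all i says exactly that a_n lies in I: p_i contains
     1 - x_i y_i, and its spanning elements vanish once x_i y_i = 1.
   The file develops, in order: chains and Noetherian rings, Hilbert's basis
   theorem, finitely generated commutative rings, Dedekind-finiteness, the
   spanning elements of p_i, the quotient S_n / I, and finally the theorem. *)

Lemma chain_mono (T : Type) (L : nat -> T -> Prop) :
  (forall k v, L k v -> L k.+1 v) ->
  forall k m, (k <= m)%N -> forall v, L k v -> L m v.
Proof.
move=> Lch k m /subnK <-; elim: (m - k)%N => [|d IH] v Lv //=.
by rewrite addSn; apply: Lch; apply: IH.
Qed.

(* A field has only the ideals 0 and F, so every chain of them stabilizes. *)
Lemma field_left_noetherian (F : fieldType) : left_noetherian F.
Proof.
move=> L HL Lch.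
case: (classic (exists k v, L k v /\ v != 0)) => [[k [v [Lv nz]]]|no_unit].
  exists k => m _ w _; have [_ _ Lmul] := HL k.
  by rewrite -(divfK nz w); apply: Lmul.
exists 0%N => m _ w Lw; have [L0 _ _] := HL 0%N.
have [->//|nz] := eqVneq w 0.
by exfalso; apply: no_unit; exists m, w.
Qed.

(* Noetherianity passes to quotients: pull a chain back along a surjection. *)
Lemma left_noetherian_image (P B : pzRingType) (f : {rmorphism P -> B}) :
  (forall b, exists p, f p = b) -> left_noetherian P -> left_noetherian B.
Proof.
move=> f_surj NP L HL Lch.
have HfL k : is_left_ideal (fun p => L k (f p)).
  have [L0 LD LM] := HL k; split.
  - by rewrite rmorph0.
  - by move=> a b La Lb; rewrite rmorphD; apply: LD.
  - by move=> r a La; rewrite rmorphM; apply: LM.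
have [N HN] := NP _ HfL (fun k v => Lch k (f v)).
exists N => m Nm b Lb; have [p fpb] := f_surj b.
by rewrite -fpb; apply: (HN m Nm); rewrite fpb.
Qed.

(* In a commutative ring left and right ideals coincide. *)
Lemma comm_right_noetherian (B : pzRingType) :
  comm_ring B -> left_noetherian B -> right_noetherian B.
Proof.
move=> Bc NB L HL Lch; apply: NB => // k.
by have [L0 LD LM] := HL k; split=> // r a La; rewrite Bc; apply: LM.
Qed.

Lemma right_noetherian_converse (R : pzRingType) :
  right_noetherian R -> left_noetherian R^c.
Proof. by move=> NR L HL Lch; apply: NR. Qed.

Lemma uniform_stabilization (R : pzRingType) (C : nat -> nat -> R -> Prop) :
  left_noetherian R -> (forall d k, is_left_ideal (C d k)) ->
  (forall d k v, C d k v -> C d k.+1 v) ->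
  forall D k0, exists2 K, (k0 <= K)%N &
    forall d, (d < D)%N -> forall m, (K <= m)%N -> forall v, C d m v -> C d K v.
Proof.
move=> NR HC Cch; elim=> [|D IH] k0; first by exists k0.
have [K k0K HK] := IH k0.
have [N HN] := NR (C D) (HC D) (Cch D).
exists (maxn K N); first exact: leq_trans k0K (leq_maxl _ _).
move=> d; rewrite ltnS leq_eqVlt => /orP[/eqP->|dD] m Km v Cv.
  apply: (chain_mono (Cch D) (leq_maxr K N)); apply: (HN m) => //.
  exact: leq_trans (leq_maxr _ _) Km.
apply: (chain_mono (Cch d) (leq_maxl K N)); apply: (HK d dD m) => //.
exact: leq_trans (leq_maxl _ _) Km.
Qed.

Section HilbertBasis.

Variable R : nzRingType.
Implicit Types (J : {poly R} -> Prop) (p q : {poly R}).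

Definition lead_coefs J (d : nat) (r : R) : Prop :=
  exists p, [/\ J p, (size p <= d.+1)%N & p`_d = r].

Definition all_lead_coefs J (r : R) : Prop := exists d, lead_coefs J d r.

Lemma lead_coefs_ideal J d : is_left_ideal J -> is_left_ideal (lead_coefs J d).
Proof.
move=> [J0 JD JM]; split.
- by exists 0; rewrite size_poly0 coef0.
- move=> _ _ [p [Jp sp <-]] [q [Jq sq <-]]; exists (p + q); split.
  + exact: JD.
  + by apply: leq_trans (size_polyD _ _) _; rewrite geq_max sp sq.
  + by rewrite coefD.
- move=> r _ [p [Jp sp <-]]; exists (r%:P * p); rewrite mul_polyC coefZ.
  by split=> //; [rewrite -mul_polyC; apply: JM | apply: leq_trans (size_scale_leq _ _) sp].
Qed.

(* Multiplying by 'X raises the degree: leading coefficients in degree d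
   remain leading coefficients in degree d + 1. *)
Lemma lead_coefs_succ J d r :
  is_left_ideal J -> lead_coefs J d r -> lead_coefs J d.+1 r.
Proof.
move=> [_ _ JM] [p [Jp sp <-]]; exists ('X * p); split; first exact: JM.
- have [->|nz] := eqVneq p 0; first by rewrite mulr0 size_poly0.
  by rewrite -commr_polyX size_mulX.
- by rewrite coefXM.
Qed.

Lemma lead_coefs_mono J d d' r : is_left_ideal J -> (d <= d')%N ->
  lead_coefs J d r -> lead_coefs J d' r.
Proof. by move=> HJ dd'; apply: (chain_mono _ dd') => k v; apply: lead_coefs_succ. Qed.

(* Leading coefficients of different degrees can be added after aligning
   the degrees with lead_coefs_mono. *)
Lemma all_lead_coefs_ideal J : is_left_ideal J -> is_left_ideal (all_lead_coefs J).
Proof.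
move=> HJ; split.
- by exists 0%N; have [] := lead_coefs_ideal 0 HJ.
- move=> a b [d1 h1] [d2 h2]; exists (maxn d1 d2).
  have [_ LD _] := lead_coefs_ideal (maxn d1 d2) HJ; apply: LD.
    by apply: lead_coefs_mono h1; rewrite ?leq_maxl.
  by apply: lead_coefs_mono h2; rewrite ?leq_maxr.
- by move=> r a [d h]; exists d; have [_ _ LM] := lead_coefs_ideal d HJ; apply: LM.
Qed.

(* If J is contained in J' and both have the same leading coefficients in
   every degree, then J = J': reduce the degree of an element of J' by
   subtracting an element of J with the same leading coefficient. *)
Lemma lead_coefs_determine J J' :
  is_left_ideal J -> is_left_ideal J' -> (forall p, J p -> J' p) ->
  (forall d r, lead_coefs J' d r -> lead_coefs J d r) -> forall p, J' p -> J p.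
Proof.
move=> [J0 JD _] [_ JD' JM'] JJ' same_lc.
suff by_size d p : J' p -> (size p <= d)%N -> J p by move=> p Jp; apply: (by_size (size p)).
elim: d p => [|d IH] p J'p sp.
  by move: sp; rewrite leqn0 size_poly_eq0 => /eqP->.
have [q [Jq sq qd]] := same_lc d p`_d (ex_intro _ p (And3 J'p sp erefl)).
rewrite -(subrK q p); apply: JD => //; apply: IH.
  by rewrite -mulN1r; apply: JD' => //; apply: JM'; apply: JJ'.
have s_pq : (size (p - q)%R <= d.+1)%N.
  by apply: leq_trans (size_polyD _ _) _; rewrite size_polyN geq_max sp sq.
have c_pq : (p - q)`_d = 0 by rewrite coefB qd subrr.
rewrite leqNgt; apply/negP => lt_d_pq.
have e_pq : size (p - q) = d.+1 by apply/eqP; rewrite eqn_leq s_pq lt_d_pq.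
have /eqP : lead_coef (p - q) = 0 by rewrite lead_coefE e_pq.
by rewrite lead_coef_eq0 => /eqP pq0; move: e_pq; rewrite pq0 size_poly0.
Qed.

(* For a chain (J k) of left ideals of R[X]:
   the ideals of all leading coefficients stabilize at some k0; the
   degree-d leading coefficients of J k0 stabilize from some degree D on;
   the degree-d leading coefficients for the finitely many d < D stabilize
   at some K >= k0. Beyond K all leading-coefficient ideals are constant,
   hence so is the chain. *)
Theorem hilbert_basis : left_noetherian R -> left_noetherian {poly R}.
Proof.
move=> NR J HJ Jch.
have lc_ch k d r : lead_coefs (J k) d r -> lead_coefs (J k.+1) d r.
  by case=> p [Jp sp pd]; exists p; split=> //; apply: Jch.
have all_lc_ch k r : all_lead_coefs (J k) r -> all_lead_coefs (J k.+1) r.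
  by case=> d /lc_ch; exists d.
have [k0 Hk0] := NR (fun k => all_lead_coefs (J k))
  (fun k => all_lead_coefs_ideal (HJ k)) all_lc_ch.
have [D HD] := NR (lead_coefs (J k0)) (fun d => lead_coefs_ideal d (HJ k0))
  (fun d r => lead_coefs_succ (HJ k0)).
have [K k0K HK] := uniform_stabilization NR (fun d k => lead_coefs_ideal d (HJ k))
  (fun d => lc_ch^~ d) D k0.
exists K => m Km; apply: lead_coefs_determine (HJ K) (HJ m) _ _.
  exact: chain_mono Jch _ _ Km.
move=> d r lc_m; have [dD|Dd] := ltnP d D; first exact: HK lc_m.
apply: (chain_mono (lc_ch^~ d) k0K).
have [d' lc_k0] := Hk0 m (leq_trans k0K Km) r (ex_intro _ d lc_m).
have [d'd|dd'] := leqP d' d; first exact: lead_coefs_mono (HJ k0) d'd lc_k0.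
apply: (lead_coefs_mono (HJ k0) Dd); apply: (HD d') => //.
exact: leq_trans Dd (ltnW dd').
Qed.

End HilbertBasis.

Definition ring_generated (R : pzRingType) (G : R -> Prop) : Prop :=
  forall S : R -> Prop, (forall g, G g -> S g) ->
    (forall a b, S a -> S b -> S (a + b)) ->
    (forall a b, S a -> S b -> S (a * b)) -> forall r, S r.

Lemma ring_generated_mono (R : pzRingType) (G G' : R -> Prop) :
  (forall g, G g -> G' g) -> ring_generated G -> ring_generated G'.
Proof. by move=> GG' gen S SG'; apply: gen => g /GG'/SG'. Qed.

Lemma generated_central (R : pzRingType) (G : R -> Prop) (z : R) :
  ring_generated G -> (forall g, G g -> g * z = z * g) -> forall r, r * z = z * r.
Proof.
move=> gen Gz; apply: gen => // a b az bz; first by rewrite mulrDl mulrDr az bz.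
by rewrite -mulrA bz !mulrA az.
Qed.

Lemma generated_comm (R : pzRingType) (G : R -> Prop) :
  ring_generated G -> (forall g h, G g -> G h -> g * h = h * g) -> comm_ring R.
Proof.
move=> gen Gc a b.
have central g : G g -> forall r, r * g = g * r.
  by move=> Gg; apply: (generated_central gen) => h Gh; apply: Gc.
by apply: (generated_central gen) => g Gg; rewrite (central g Gg).
Qed.

Fixpoint polyn (F : fieldType) (m : nat) : comNzRingType :=
  if m is m'.+1 then {poly polyn F m'} else F.

Lemma polyn_noetherian (F : fieldType) (m : nat) : left_noetherian (polyn F m).
Proof.
by elim: m => [|m IH] /=; [apply: field_left_noetherian | apply: hilbert_basis].
Qed.

Section Evaluation.

Variables (F : fieldType) (C : comNzRingType) (f0 : {rmorphism F -> C}).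

(* In a commutative ring every point can be evaluated at. *)
Lemma commr_rmorph_comm (R : nzSemiRingType) (f : {rmorphism R -> C}) (u : C) :
  commr_rmorph f u.
Proof. by move=> a; rewrite /GRing.comm mulrC. Qed.

Fixpoint polyn_eval (s : seq C) : {rmorphism polyn F (size s) -> C} :=
  match s return {rmorphism polyn F (size s) -> C} with
  | [::] => f0
  | c :: s' => horner_morph (commr_rmorph_comm (polyn_eval s') c)
  end.

Lemma polyn_eval_const (c : C) (s : seq C) (p : polyn F (size s)) :
  polyn_eval (c :: s) p%:P = polyn_eval s p.
Proof. exact: horner_morphC. Qed.

Lemma polyn_eval_scalar (s : seq C) (k : F) : exists p, polyn_eval s p = f0 k.
Proof.
elim: s => [|c s [p <-]]; first by exists k.
by exists p%:P; apply: polyn_eval_const.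
Qed.

Lemma polyn_eval_point (s : seq C) (c : C) : c \in s -> exists p, polyn_eval s p = c.
Proof.
elim: s => // c' s IH; rewrite in_cons => /orP[/eqP->|cs].
  by exists 'X; apply: horner_morphX.
by have [p <-] := IH cs; exists p%:P; apply: polyn_eval_const.
Qed.

(* If C is generated by f0 F and the finite set s, evaluation at s is
   surjective, so C is a quotient of a polynomial ring: it is Noetherian. *)
Lemma fingen_left_noetherian (s : seq C) :
  ring_generated (fun c => (exists k, c = f0 k) \/ c \in s) -> left_noetherian C.
Proof.
move=> gen; apply: (@left_noetherian_image _ _ (polyn_eval s));
  last exact: polyn_noetherian.
apply: gen => [c [[k ->]|cs]||].
- exact: polyn_eval_scalar.
- exact: polyn_eval_point.
- by move=> _ _ [p <-] [q <-]; exists (p + q); rewrite rmorphD.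
- by move=> _ _ [p <-] [q <-]; exists (p * q); rewrite rmorphM.
Qed.

End Evaluation.

Section NonTrivialCopy.

Variables (B : pzRingType) (Bc : comm_ring B) (B1 : (1 : B) != 0).

Definition comm_copy of comm_ring B & (1 : B) != 0 : Type := B.
Local Notation C := (comm_copy Bc B1).
HB.instance Definition _ := GRing.PzRing.copy C B.
HB.instance Definition _ := GRing.PzRing_hasCommutativeMul.Build C Bc.
HB.instance Definition _ := GRing.PzSemiRing_isNonZero.Build C B1.

Variables (F : fieldType) (h : {rmorphism F -> B}).

Definition copy_rmorph : F -> C := h.
HB.instance Definition _ := GRing.isNmodMorphism.Build F C copy_rmorph
  (conj (rmorph0 h) (rmorphD h)).
HB.instance Definition _ := GRing.isMonoidMorphism.Build F C copy_rmorph
  (conj (rmorph1 h) (rmorphM h)).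

End NonTrivialCopy.

Lemma comm_fingen_left_noetherian (F : fieldType) (B : pzRingType)
    (h : {rmorphism F -> B}) (s : seq B) : comm_ring B ->
  ring_generated (fun b => (exists k, b = h k) \/ b \in s) -> left_noetherian B.
Proof.
move=> Bc gen; have [B10|B1] := eqVneq (1 : B) 0.
  move=> L HL _; exists 0%N => m _ v _; have [L0 _ _] := HL 0%N.
  by rewrite -[v]mul1r B10 mul0r.
exact: (@fingen_left_noetherian F (comm_copy Bc B1) (copy_rmorph Bc B1 h) s).
Qed.

Definition left_span (R : pzRingType) (g : nat -> R) (m : nat) (w : R) : Prop :=
  exists r : nat -> R, w = \sum_(k < m) r k * g k.

Lemma left_span_ideal (R : pzRingType) (g : nat -> R) m :
  is_left_ideal (left_span g m).
Proof.
split.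
- by exists (fun _ => 0); rewrite big1 // => k _; rewrite mul0r.
- move=> _ _ [r1 ->] [r2 ->]; exists (fun k => r1 k + r2 k).
  by rewrite -big_split; apply: eq_bigr => k _; rewrite mulrDl.
- move=> c _ [r ->]; exists (fun k => c * r k).
  by rewrite mulr_sumr; apply: eq_bigr => k _; rewrite mulrA.
Qed.

Lemma left_span_chain (R : pzRingType) (g : nat -> R) m w :
  left_span g m w -> left_span g m.+1 w.
Proof.
case=> r ->; exists (fun k => if (k < m)%N then r k else 0).
by rewrite big_ord_recr /= ltnn mul0r addr0; apply: eq_bigr => k _; rewrite ltn_ord.
Qed.

Lemma left_span_last (R : pzRingType) (g : nat -> R) m : left_span g m.+1 (g m).
Proof.
exists (fun k => if k == m then 1 else 0).
rewrite big_ord_recr /= eqxx mul1r big1 ?add0r // => k _.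
by rewrite (ltn_eqF (ltn_ord k)) mul0r.
Qed.

Section DedekindFinite.

Variables (R : pzRingType) (u v : R).
Hypothesis vu : v * u = 1.

Lemma pow_left_inverse k : v ^+ k * u ^+ k = 1.
Proof.
elim: k => [|k IH]; first by rewrite !expr0 mulr1.
by rewrite exprSr exprS mulrA -(mulrA _ v) vu mulr1.
Qed.

Lemma pow_cancel k N : (k <= N)%N -> v ^+ k * u ^+ N = u ^+ (N - k).
Proof. by move=> kN; rewrite -(subnKC kN) exprD mulrA pow_left_inverse mul1r addKn. Qed.

Lemma defect_idempotent : (1 - u * v) * (1 - u * v) = 1 - u * v.
Proof. by rewrite mulrBl mul1r mulrBr mulr1 -mulrA (mulrA v) vu mul1r subrr subr0. Qed.

Lemma defect_pow_annihilate j : (0 < j)%N -> (1 - u * v) * u ^+ j = 0.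
Proof. by case: j => // j _; rewrite exprS mulrA mulrBl mul1r -mulrA vu mulr1 subrr mul0r. Qed.

(* With e = 1 - u v, the chain
   of left ideals generated by e, e v, e v^2, ... stabilizes, so
   e v^N = sum_(k < N) r_k e v^k; multiplying on the right by u^N e gives
   e = e v^N u^N e = sum_k r_k e u^(N - k) e = 0. *)
Lemma left_noetherian_dedekind_finite : left_noetherian R -> u * v = 1.
Proof.
move=> NR; set e := 1 - u * v; pose g k := e * v ^+ k.
have [N HN] := NR _ (left_span_ideal g) (left_span_chain (g := g)).
have [r eN] := HN N.+1 (leqnSn N) _ (left_span_last g N).
have e0 : e = 0.
  have e_idem : e * e = e := defect_idempotent.
  have -> : e = g N * (u ^+ N * e).
    by rewrite mulrA -(mulrA e) pow_left_inverse mulr1 e_idem.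
  rewrite eN mulr_suml big1 // => k _.
  rewrite /g -!mulrA (mulrA (v ^+ k)) pow_cancel ?(ltnW (ltn_ord k)) //.
  by rewrite (mulrA e) defect_pow_annihilate ?subn_gt0 ?ltn_ord // mul0r mulr0.
by apply/eqP; rewrite eq_sym -subr_eq0 -/e e0.
Qed.

End DedekindFinite.

(* The right-handed version, via the converse ring. *)
Lemma right_noetherian_dedekind_finite (R : pzRingType) (u v : R) :
  v * u = 1 -> right_noetherian R -> u * v = 1.
Proof.
move=> vu /right_noetherian_converse NR.
exact: (@left_noetherian_dedekind_finite R^c v u vu NR).
Qed.

Section HeightOnePrimes.

Variables (n : nat) (R : pzRingType) (u v : 'I_n -> R).

Lemma pgen_trivial i :
  pgen u v i (fun _ => 0%N) (fun _ => 0%N) 0 0 = 1 - u i * v i.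
Proof. by rewrite /pgen big1 => [|j _]; rewrite ?mul1r ?expr0 ?mulr1. Qed.

Lemma pgen_vanish i a b k l : u i * v i = 1 -> pgen u v i a b k l = 0.
Proof.
move=> uv; rewrite /pgen exprSr exprS mulrA -(mulrA _ (u i)) uv mulr1.
by rewrite subrr mulr0.
Qed.

Lemma pgen_rmorph (S : pzRingType) (f : {rmorphism R -> S}) i a b k l :
  f (pgen u v i a b k l) = pgen (f \o u) (f \o v) i a b k l.
Proof.
rewrite /pgen rmorphM rmorph_prod rmorphB !rmorphM !rmorphXn; congr (_ * _).
by apply: eq_bigr => j _; rewrite rmorphM !rmorphXn.
Qed.

End HeightOnePrimes.

Lemma an_kernel_iff (K : fieldType) (n : nat) (A : algType K) (x y : 'I_n -> A)
    (B : pzRingType) (pi : {rmorphism A -> B}) :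
  (forall v, in_an x y v -> pi v = 0) <-> (forall i, pi (x i) * pi (y i) = 1).
Proof.
split=> [an0 i|pixy v [w [pw ->]]].
  have /an0 : in_an x y (1 - x i * y i).
    rewrite -pgen_trivial; set p := pgen _ _ _ _ _ _ _.
    exists (fun j => if j == i then p else 0).
    split; last by rewrite (bigD1 i) //= eqxx big1 ?addr0 // => j /negbTE->.
    move=> j; case: eqP => [->|_]; last by exists [::]; rewrite big_nil.
    by exists [:: (1, (fun _ => 0%N, fun _ => 0%N, 0%N, 0%N))]; rewrite big_seq1 scale1r.
  by rewrite rmorphB rmorph1 rmorphM => /eqP; rewrite subr_eq0 eq_sym => /eqP.
rewrite rmorph_sum big1 // => i _; have [s ->] := pw i.
rewrite rmorph_sum big1 // => t _.
by rewrite -mulr_algl rmorphM pgen_rmorph pgen_vanish ?mulr0 //; apply: pixy.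
Qed.

Section Quotient.

Variables (K : fieldType) (n : nat) (A : algType K) (x y : 'I_n -> A).
Variables (B : pzRingType) (pi : {rmorphism A -> B}).
Hypotheses (Sn : is_Sn x y) (pi_surj : forall b : B, exists a, pi a = b).

Definition quotient_gens (b : B) : Prop :=
  (exists k : K, b = pi k%:A) \/ exists i, b = pi (x i) \/ b = pi (y i).

(* B is generated by quotient_gens, since S_n is generated by x and y. *)
Lemma quotient_generated : ring_generated quotient_gens.
Proof.
have [_ Sn_gen _] := Sn; move=> S Sgens SD SM b; have [a <-] := pi_surj b.
apply: (Sn_gen (fun a => S (pi a))).
- by apply: Sgens; left; exists 1; rewrite scale1r.
- by move=> i; split; apply: Sgens; right; exists i; [left | right].
- by move=> a1 a2 h1 h2; rewrite rmorphD; apply: SD.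
- by move=> a1 a2 h1 h2; rewrite rmorphM; apply: SM.
- by move=> k a1 h; rewrite -mulr_algl rmorphM; apply: SM => //; apply: Sgens; left; exists k.
Qed.

Lemma quotient_yx i : pi (y i) * pi (x i) = 1.
Proof. by have [[yx _] _ _] := Sn; rewrite -rmorphM yx rmorph1. Qed.

(* Scalars are central in S_n, hence their images are central in B. *)
Lemma quotient_scalar_central (k : K) (b : B) : pi k%:A * b = b * pi k%:A.
Proof. by have [a <-] := pi_surj b; rewrite -!rmorphM mulr_algl mulr_algr. Qed.

(* S_n / I is commutative iff x_i y_i = 1 in it for every i: the defining
   relations already make all other pairs of generators commute. *)
Lemma quotient_comm_iff : comm_ring B <-> forall i, pi (x i) * pi (y i) = 1.
Proof.
split=> [Bc i|xy]; first by rewrite Bc quotient_yx.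
have [[_ rel] _ _] := Sn.
have gens_comm i j : [/\ pi (x i) * pi (x j) = pi (x j) * pi (x i),
    pi (x i) * pi (y j) = pi (y j) * pi (x i)
  & pi (y i) * pi (y j) = pi (y j) * pi (y i)].
  have [<-|ij] := eqVneq i j; first by rewrite xy quotient_yx.
  by have [xy' xx yy] := rel i j ij; rewrite -!rmorphM xy' xx yy.
apply: (generated_comm quotient_generated).
move=> _ h [[k ->]|[i [->|->]]]; first by rewrite quotient_scalar_central.
all: case=> [[l ->]|[j [->|->]]]; first by rewrite quotient_scalar_central.
all: by have [xixj xiyj yiyj] := gens_comm i j; have [_ xjyi _] := gens_comm j i.
Qed.

(* A commutative S_n / I is generated by K and 2n elements: Noetherian. *)
Lemma comm_quotient_left_noetherian : comm_ring B -> left_noetherian B.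
Proof.
move=> Bc; apply: (@comm_fingen_left_noetherian K B (pi \o in_alg A)
  (codom (pi \o x) ++ codom (pi \o y)) Bc).
apply: ring_generated_mono quotient_generated => _ [[k ->]|[i [->|->]]].
- by left; exists k.
- by right; rewrite mem_cat (codom_f (pi \o x)).
- by right; rewrite mem_cat (codom_f (pi \o y)) orbT.
Qed.

End Quotient.

(* Theorem 5.1. *)
Theorem theorem5p1 (K : fieldType) (n : nat) (A : algType K)
  (x y : 'I_n -> A) (I : A -> Prop) (B : pzRingType) (pi : {rmorphism A -> B}) :
  (0 < n)%N -> is_Sn x y -> is_ideal I ->
  (forall a, I a <-> pi a = 0) -> (forall b : B, exists a, pi a = b) ->
  [/\ left_noetherian B <-> right_noetherian B,
      left_noetherian B <-> comm_ring B
    & left_noetherian B <-> (forall v, in_an x y v -> I v)].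
Proof.
move=> _ Sn _ kerI pi_surj.
have comm_iff := quotient_comm_iff Sn pi_surj.
have comm_noeth := comm_quotient_left_noetherian Sn pi_surj.
have noeth_comm : left_noetherian B -> comm_ring B.
  move=> NB; apply/comm_iff => i.
  exact: left_noetherian_dedekind_finite (quotient_yx pi Sn i) NB.
have rnoeth_comm : right_noetherian B -> comm_ring B.
  move=> NB; apply/comm_iff => i.
  exact: right_noetherian_dedekind_finite (quotient_yx pi Sn i) NB.
have an_iff : (forall v, in_an x y v -> I v) <-> comm_ring B.
  rewrite comm_iff -an_kernel_iff.
  by split=> an0 v /an0 /kerI.
split; split.
- by move=> NB; apply: comm_right_noetherian (noeth_comm NB) NB.
- by move=> /rnoeth_comm /comm_noeth.
- exact: noeth_comm.
- exact: comm_noeth.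
- by move=> /noeth_comm /an_iff.
- by move=> /an_iff /comm_noeth.
Qed.
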